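(* Let $p$ be a prime, $R$ an $F$-pure ring of characteristic $p$, and $f\in R$ a non-zero non-unit. Then for every integer $d\ge1$, \[ p^d\,\langle \operatorname{fpt}(f)\rangle_d = \max\{a\in\mathbb{N} : R\cdot f^{a/p^d}\subseteq R^{1/p^d}\text{ splits over }R\}. \]
   Context: A ring $R$ of characteristic $p$ is $F$-pure if $R\subseteq R^{1/p}$ splits as a map of $R$-modules; such a ring is reduced. Roots. $R^{1/p^e}$ is the ring of formal symbols $r^{1/p^e}$ ($r\in R$), with $r^{1/p^e}+s^{1/p^e}=(r+s)^{1/p^e}$ and $r^{1/p^e}s^{1/p^e}=(rs)^{1/p^e}$. It contains $R$ via $r\mapsto(r^{p^e})^{1/p^e}$. Powers of $f$. $f^{a/p^e}:=(f^a)^{1/p^e}$. Splitting. For $t \in R^{1/p^e}$, the inclusion $R\cdot t\subseteq R^{1/p^e}$ splits over $R$ if some $R$-linear $\theta:R^{1/p^e}\to R$ has $\theta(t)=1$. $F$-pure threshold. $(R,f^\lambda)$ is $F$-pure if $R\cdot f^{\lfloor (p^e-1)\lambda\rfloor/p^e}\subseteq R^{1/p^e}$ splits for all $e\ge1$. $\operatorname{fpt}(f)$ is the supremum of $\lambda\ge 0$ with $(R,f^\lambda)$ $F$-pure; it lies in $[0,1]$. Base $p$ expansions. For $\alpha\in(0,1]$, its non-terminating base $p$ expansion is the unique expression $\alpha=\sum_{e\ge1}a_e/p^e$ with integers $0\le a_e\le p-1$ not all eventually zero. The $e$-th truncation is $\langle\alpha\rangle_e:=\sum_{i=1}^e a_i/p^i$.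 By convention $\langle 0\rangle_e=0$. *)

From HB Require Import structures.
From mathcomp Require Import all_boot all_order all_algebra.
From mathcomp Require Import all_classical all_reals.
From mathcomp Require Import topology normedtype sequences.
From mathcomp Require Import Rstruct Rstruct_topology.

Set Implicit Arguments.
Unset Strict Implicit.
Unset Printing Implicit Defensive.

Import Order.TTheory GRing.Theory Num.Theory.
Local Open Scope ring_scope.
Local Open Scope classical_set_scope.

(* R^{1/p^e} is identified with R as an abelian group (the symbol r^{1/p^e}
   is represented by r), with R-module structure  r . s = r^(p^e) * s.
   An R-linear map theta : R^{1/p^e} -> R is thus an additive map
   theta : R -> R with theta (r^(p^e) * s) = r * theta s. *)
Definition frob_linear (A : comNzRingType) (p e : nat) (theta : A -> A) : Prop :=
  (forall x y : A, theta (x + y) = theta x + theta y) /\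
  (forall r s : A, theta (r ^+ (p ^ e) * s) = r * theta s).

(* For t in R^{1/p^e} (represented by t : A), R.t ⊆ R^{1/p^e} splits over R. *)
Definition splits (A : comNzRingType) (p e : nat) (t : A) : Prop :=
  exists theta : A -> A, frob_linear p e theta /\ theta t = 1.

Definition Fpure (A : comNzRingType) (p : nat) : Prop := splits p 1 (1 : A).

(* (R, f^lambda) is F-pure: R . f^{floor((p^e-1) lambda)/p^e} ⊆ R^{1/p^e}
   splits for every e >= 1 (f^{a/p^e} is represented by f^a). *)
Definition Fpure_pair (A : comNzRingType) (p : nat) (f : A) (lambda : Rdefinitions.R) : Prop :=
  forall e : nat, (1 <= e)%N ->
    splits p e (f ^+ Num.truncn (((p ^ e)%N%:R - 1) * lambda)).

Definition fpt (A : comNzRingType) (p : nat) (f : A) : Rdefinitions.R :=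
  sup [set lambda : Rdefinitions.R | 0 <= lambda /\ Fpure_pair p f lambda].

(* a : nat -> nat (a e = the e-th digit, e >= 1) is a non-terminating base p
   expansion of alpha. *)
Definition nonterm_expansion (p : nat) (alpha : Rdefinitions.R) (a : nat -> nat) : Prop :=
  (forall e, (1 <= e)%N -> (a e < p)%N) /\
  (forall N, exists e, (N <= e)%N /\ a e <> 0%N) /\
  ((fun n : nat => \sum_(1 <= i < n.+1) (a i)%:R / (p%:R ^+ i) : Rdefinitions.R)
     @ \oo --> alpha).

(* e-th truncation <alpha>_e of the non-terminating base p expansion
   (which is unique when it exists, i.e. for alpha in (0,1]);
   by convention <0>_e = 0 (0 has no such expansion). *)
Definition trunc_exp (p : nat) (alpha : Rdefinitions.R) (e : nat) : Rdefinitions.R :=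
  match pselect (exists a, nonterm_expansion p alpha a) with
  | left H => let a := projT1 (cid H) in
              \sum_(1 <= i < e.+1) (a i)%:R / (p%:R ^+ i)
  | right _ => 0
  end.

(** Let [ν(p^e)] be the largest [a] for which [R.f^{a/p^e}] splits from
    [R^{1/p^e}]; it is [< p^e] because [f] is not a unit.  Composing
    splittings with Frobenius gives [p ν(p^e) <= ν(p^{e+1}) < p (ν(p^e) + 1)],
    so [ν(p^e)] is the integer written by the first [e] digits of the base [p]
    expansion with digits [ν(p^e) - p ν(p^{e-1})].  The ratios [ν(p^e)/p^e]
    increase to a limit [L], and [L] is the largest [λ] with [(R, f^λ)] F-pure,
    so [fpt f = L].  If some [ν(p^k)] is positive, composing with a splitting
    of [f^{1/p^k}] gives [ν(p^{e+k}) > p^k ν(p^e)], so infinitely many digits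
    are non-zero: the expansion is the non-terminating one and its [d]-th
    truncation is [ν(p^d)/p^d].  Otherwise [L = 0 = ν(p^d)]. *)
From HB Require Import structures.
From mathcomp Require Import all_boot all_order all_algebra.
From mathcomp Require Import all_classical all_reals.
From mathcomp Require Import topology normedtype sequences.
From mathcomp Require Import Rstruct Rstruct_topology.
From mathcomp Require Import zify ring lra.
Import Order.TTheory GRing.Theory Num.Theory.
Local Open Scope ring_scope.
Local Open Scope classical_set_scope.

Section FrobeniusLinear.
Context {A : comNzRingType} {p : nat}.

Lemma frob_linear_id : frob_linear p 0 (@id A).
Proof. by split=> // r s; rewrite expn0 expr1. Qed.

Lemma frob_linear_comp (e k : nat) (theta phi : A -> A) :
  frob_linear p e theta -> frob_linear p k phi ->
  frob_linear p (e + k) (theta \o phi).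
Proof.
move=> [thetaD thetaM] [phiD phiM]; split=> [x y|r s] /=.
  by rewrite phiD thetaD.
by rewrite expnD exprM phiM thetaM.
Qed.

Lemma frob_linear_mull (e : nat) (theta : A -> A) (c : A) :
  frob_linear p e theta -> frob_linear p e (fun x => theta (c * x)).
Proof.
move=> [thetaD thetaM]; split=> [x y|r s]; first by rewrite mulrDr thetaD.
by rewrite mulrCA thetaM.
Qed.

Lemma Fpure_splits (e : nat) : Fpure A p -> splits p e (1 : A).
Proof.
move=> [phi [phiL phi1]]; elim: e => [|e [theta [thetaL theta1]]].
  by exists id; split=> //; apply: frob_linear_id.
exists (theta \o phi); split; first by rewrite -addn1; apply: frob_linear_comp.
by rewrite /= phi1.
Qed.

Context {f : A}.

Lemma splits_exprW {e a b : nat} :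
  (b <= a)%N -> splits p e (f ^+ a) -> splits p e (f ^+ b).
Proof.
move=> le_ba [theta [thetaL theta1]].
exists (fun x => theta (f ^+ (a - b) * x)); split; first exact: frob_linear_mull.
by rewrite -exprD subnK.
Qed.

Lemma splits_expr_comp {e k a c : nat} :
  splits p e (f ^+ a) -> splits p k (f ^+ c) ->
  splits p (e + k) (f ^+ (a * p ^ k + c)).
Proof.
move=> [theta [thetaL theta1]] [phi [phiL phi1]].
exists (theta \o phi); split; first exact: frob_linear_comp.
by have [_ phiM] := phiL; rewrite /= exprD exprM phiM phi1 mulr1.
Qed.

Lemma splits_expr_divp {e b : nat} : p \in [pchar A] ->
  splits p e.+1 (f ^+ b) -> splits p e (f ^+ (b %/ p)).
Proof.
move=> pcharA /(splits_exprW (leq_divM b p)) [psi [[psiD psiM] psi1]].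
exists (fun x => psi (x ^+ p)); split; last by rewrite -exprM.
split=> [x y|r s]; last by rewrite exprMn -exprM -expnSr psiM.
by rewrite -!(pFrobenius_autE pcharA) pFrobenius_autD_comm ?psiD //; apply: mulrC.
Qed.

Lemma splits_expr_divn {e k b : nat} : p \in [pchar A] ->
  splits p (e + k) (f ^+ b) -> splits p e (f ^+ (b %/ p ^ k)).
Proof.
move=> pcharA; elim: k b => [|k IHk] b; first by rewrite addn0 expn0 divn1.
by rewrite addnS expnS divnMA => /(splits_expr_divp pcharA)/IHk.
Qed.

Lemma splits_expr_lt {e a : nat} :
  ~ (exists g : A, f * g = 1) -> splits p e (f ^+ a) -> (a < p ^ e)%N.
Proof.
move=> f_nonunit [theta [[_ thetaM] theta1]]; rewrite ltnNge; apply/negP=> le_pe_a.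
apply: f_nonunit; exists (theta (f ^+ (a - p ^ e))).
by rewrite -thetaM -exprD subnKC.
Qed.

End FrobeniusLinear.

Local Notation R := Rdefinitions.R.

Section BaseExpansion.
Variable p : nat.

Fixpoint base_val (b : nat -> nat) (d : nat) : nat :=
  if d is d'.+1 then (p * base_val b d' + b d'.+1)%N else 0%N.

Lemma base_val_shift_ge (b : nat -> nat) (m k : nat) :
  (p ^ k * base_val b m <= base_val b (m + k))%N.
Proof.
elim: k => [|k IHk]; first by rewrite expn0 mul1n addn0.
by rewrite addnS /= expnS -mulnA (leq_trans _ (leq_addr _ _)) // leq_mul2l IHk orbT.
Qed.

Lemma base_val_shift_gt (b : nat -> nat) (m k : nat) : (0 < b (m + k).+1)%N ->
  (p ^ k.+1 * base_val b m < base_val b (m + k).+1)%N.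
Proof. by move=> b_gt0; have := base_val_shift_ge b m k; rewrite expnS /=; nia. Qed.

Lemma base_val_shift_lt (b : nat -> nat) (m k : nat) :
  (forall i, (1 <= i)%N -> (b i < p)%N) ->
  (base_val b (m + k) < p ^ k * (base_val b m).+1)%N.
Proof.
move=> b_lt; elim: k => [|k IHk]; first by rewrite expn0 mul1n addn0.
by rewrite addnS /= expnS; have := b_lt (m + k).+1 isT; nia.
Qed.

Hypothesis p_gt1 : (1 < p)%N.

Let p_gt0 : (0 < p)%N. Proof. exact: ltnW. Qed.

Let p_neq0 : p%:R != 0 :> R. Proof. by rewrite pnatr_eq0 -lt0n. Qed.

Let pX_gt0 (n : nat) : 0 < p%:R ^+ n :> R.
Proof. by rewrite exprn_gt0 // ltr0n. Qed.

Lemma ler_natdivX (x y m n : nat) :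
  (x%:R / p%:R ^+ m <= y%:R / p%:R ^+ n :> R) = (x * p ^ n <= y * p ^ m)%N.
Proof.
rewrite ler_pdivrMr // mulrAC ler_pdivlMr //.
by rewrite -!natrX -!natrM ler_nat.
Qed.

Lemma ltr_natdivX (x y m n : nat) :
  (x%:R / p%:R ^+ m < y%:R / p%:R ^+ n :> R) = (x * p ^ n < y * p ^ m)%N.
Proof. by rewrite ltNge ler_natdivX ltnNge. Qed.

Definition base_ratio (b : nat -> nat) (n : nat) : R :=
  (base_val b n)%:R / p%:R ^+ n.

Lemma sum_digitsE (b : nat -> nat) (n : nat) :
  \sum_(1 <= i < n.+1) (b i)%:R / p%:R ^+ i = base_ratio b n.
Proof.
rewrite /base_ratio; elim: n => [|n IHn]; first by rewrite big_geq // mul0r.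
rewrite big_nat_recr //= IHn natrD natrM exprS.
by field; rewrite ?expf_neq0.
Qed.

Lemma base_ratio_nondecreasing (b : nat -> nat) :
  nondecreasing_seq (base_ratio b).
Proof.
move=> m n le_mn; rewrite /base_ratio ler_natdivX -(subnKC le_mn) expnD.
by have := base_val_shift_ge b m (n - m); nia.
Qed.

Lemma base_ratio_lt (b : nat -> nat) (d e : nat) :
  (d < e)%N -> b e <> 0%N -> base_ratio b d < base_ratio b e.
Proof.
case: e => // e; rewrite ltnS => le_de /eqP; rewrite -lt0n.
rewrite -(subnKC le_de); set k := (e - d)%N => b_gt0.
rewrite /base_ratio ltr_natdivX -addnS expnD addnS.
have := @base_val_shift_gt b d k b_gt0; have := expn_gt0 p d; rewrite p_gt0; nia.
Qed.

Section Digits.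
Variable b : nat -> nat.
Hypothesis b_lt : forall i, (1 <= i)%N -> (b i < p)%N.

Lemma base_ratio_le_succ (d n : nat) :
  base_ratio b n <= (base_val b d).+1%:R / p%:R ^+ d.
Proof.
apply: (@le_trans _ _ (base_ratio b (maxn d n))).
  exact/base_ratio_nondecreasing/leq_maxr.
rewrite /base_ratio ler_natdivX -(subnKC (leq_maxl d n)) expnD.
by have := base_val_shift_lt b d (maxn d n - d) b_lt; nia.
Qed.

Lemma has_ubound_base_ratio : has_ubound (range (base_ratio b)).
Proof.
exists ((base_val b 0).+1%:R / p%:R ^+ 0) => _ [n _ <-].
exact: base_ratio_le_succ.
Qed.

Definition base_lim : R := sup (range (base_ratio b)).

Lemma base_ratio_cvg : base_ratio b @ \oo --> base_lim.
Proof.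
exact: nondecreasing_cvgn (base_ratio_nondecreasing b) has_ubound_base_ratio.
Qed.

Lemma base_lim_bounds (d : nat) :
  (base_val b d)%:R <= (p ^ d)%N%:R * base_lim <= (base_val b d).+1%:R.
Proof.
apply/andP; split; rewrite natrX mulrC.
  rewrite -ler_pdivrMr ?pX_gt0 //; apply: sup_upper_bound; last by exists d.
  by split; [exists (base_ratio b 0), 0%N | exact: has_ubound_base_ratio].
rewrite -ler_pdivlMr ?pX_gt0 //.
apply: ge_sup; first by exists (base_ratio b 0), 0%N.
by move=> _ [n _ <-]; exact: base_ratio_le_succ.
Qed.

End Digits.

(* Strict on the left because infinitely many later digits are non-zero. *)
Lemma nonterm_expansion_bounds (alpha : R) (b : nat -> nat) (d : nat) :
  nonterm_expansion p alpha b ->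
  (base_val b d)%:R < (p ^ d)%N%:R * alpha <= (base_val b d).+1%:R.
Proof.
move=> [b_lt [b_nonterm]]; rewrite (funext (sum_digitsE b)) => b_cvg.
apply/andP; split; rewrite natrX mulrC.
  rewrite -ltr_pdivrMr ?pX_gt0 //; have [e [lt_de b_e]] := b_nonterm d.+1.
  apply: (lt_le_trans (@base_ratio_lt b d e lt_de b_e)).
  apply: (cvgr_to_ge b_cvg); exists e => // n /= le_en.
  exact: base_ratio_nondecreasing.
rewrite -ler_pdivlMr ?pX_gt0 //; apply: (cvgr_to_le b_cvg); exists 0%N => // n _.
exact: base_ratio_le_succ.
Qed.

Lemma nonterm_expansion_base_lim (b : nat -> nat) :
  (forall i, (1 <= i)%N -> (b i < p)%N) ->
  (forall N, exists e, (N <= e)%N /\ b e <> 0%N) ->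
  nonterm_expansion p (base_lim b) b.
Proof.
move=> b_lt b_nonterm; do 2!split=> //.
by rewrite (funext (sum_digitsE b)); exact: base_ratio_cvg.
Qed.

Lemma nat_eq_between (x : R) (m n : nat) :
  m%:R < x <= m.+1%:R -> n%:R < x <= n.+1%:R -> m = n.
Proof.
move=> /andP[gt_xm le_xm] /andP[gt_xn le_xn].
apply/anti_leq; rewrite -(ltnS m n) -(ltnS n m) -!(ltr_nat R).
by rewrite (lt_le_trans gt_xm le_xn) (lt_le_trans gt_xn le_xm).
Qed.

Lemma trunc_exp_nonterm (alpha : R) (b : nat -> nat) (d : nat) :
  nonterm_expansion p alpha b ->
  (p ^ d)%N%:R * trunc_exp p alpha d = (base_val b d)%:R.
Proof.
move=> b_exp; rewrite /trunc_exp; case: pselect => [ex|]; last first.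
  by move=> no_exp; exfalso; apply: no_exp; exists b.
case: (cid ex) => c c_exp /=; rewrite sum_digitsE /base_ratio.
rewrite (@nat_eq_between ((p ^ d)%N%:R * alpha) _ _
  (@nonterm_expansion_bounds _ _ d c_exp) (@nonterm_expansion_bounds _ _ d b_exp)).
by rewrite natrX mulrC mulfVK // expf_neq0.
Qed.

Lemma trunc_exp0 (d : nat) : trunc_exp p 0 d = 0.
Proof.
rewrite /trunc_exp; case: pselect => // ex; case: (cid ex) => b b_exp /=.
have /andP[+ _] := @nonterm_expansion_bounds _ _ d b_exp.
by rewrite mulr0 ltNge ler0n.
Qed.

End BaseExpansion.

Lemma sup_max_eq (E : set R) (x : R) : E x -> ubound E x -> sup E = x.
Proof.
move=> Ex ubx; apply/le_anti; rewrite ge_sup //=; last by exists x.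
by apply: sup_upper_bound => //; split; exists x.
Qed.

Lemma exists_expn_ge (x : R) {p : nat} : (1 < p)%N ->
  exists e, (1 <= e)%N /\ x <= (p ^ e)%N%:R - 1.
Proof.
move=> p_gt1; exists (Num.truncn x).+1; split=> //.
have le_pe : ((Num.truncn x).+1 <= p ^ (Num.truncn x).+1 - 1)%N.
  by have := ltn_expl (Num.truncn x).+1 p_gt1; lia.
apply: (le_trans (ltW (truncnS_gt x))).
by rewrite -(@natrB _ _ 1) ?expn_gt0 ?(ltnW p_gt1) // ler_nat.
Qed.

Section SplittingNumbers.
Variable p : nat.
Context {A : comNzRingType}.
Variable f : A.
Hypotheses (p_gt1 : (1 < p)%N) (pcharA : p \in [pchar A]) (FpureA : Fpure A p).
Hypothesis f_nonunit : ~ exists g : A, f * g = 1.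

Definition nu (e : nat) : nat := \max_(a < p ^ e | `[< splits p e (f ^+ a) >]) a.

Lemma nu_max {e a : nat} : splits p e (f ^+ a) -> (a <= nu e)%N.
Proof.
move=> a_splits; have a_lt := splits_expr_lt f_nonunit a_splits.
exact: (leq_bigmax_cond (Ordinal a_lt) (asboolT a_splits)).
Qed.

Lemma nu_splits (e : nat) : splits p e (f ^+ nu e).
Proof.
have pe_gt0 : (0 < p ^ e)%N by rewrite expn_gt0 ltnW.
pose P (a : 'I_(p ^ e)) := `[< splits p e (f ^+ a) >].
have P_gt0 : (0 < #|P|)%N.
  apply/card_gt0P; exists (Ordinal pe_gt0); apply: asboolT.
  by rewrite expr0; exact: Fpure_splits.
have [i /asboolW i_splits nu_i] :=
  eq_bigmax_cond (fun a : 'I_(p ^ e) => nat_of_ord a) P_gt0.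
by rewrite /nu nu_i.
Qed.

Lemma nu_lt (e : nat) : (nu e < p ^ e)%N.
Proof. exact: splits_expr_lt f_nonunit (nu_splits e). Qed.

Lemma nu_shift_ge (m k : nat) : (nu m * p ^ k <= nu (m + k))%N.
Proof.
apply: nu_max; rewrite -[(nu m * p ^ k)%N]addn0.
by apply: splits_expr_comp (nu_splits m) _; rewrite expr0; exact: Fpure_splits.
Qed.

Lemma nu_shift_gt (m k : nat) : (0 < nu k)%N -> (nu m * p ^ k < nu (m + k))%N.
Proof.
move=> nu_k_gt0; rewrite -addn1; apply: nu_max.
exact: splits_expr_comp (nu_splits m) (splits_exprW nu_k_gt0 (nu_splits k)).
Qed.

Lemma nu_shift_lt (m k : nat) : (nu (m + k) < (nu m).+1 * p ^ k)%N.
Proof.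
rewrite -ltn_divLR ?expn_gt0 ?(ltnW p_gt1) // ltnS.
exact/nu_max/(splits_expr_divn pcharA)/nu_splits.
Qed.

Definition nu_digit (i : nat) : nat := (nu i - p * nu i.-1)%N.

Lemma nu_succ (e : nat) : nu e.+1 = (p * nu e + nu_digit e.+1)%N.
Proof.
by rewrite /nu_digit subnKC //= mulnC; have := nu_shift_ge e 1; rewrite expn1 addn1.
Qed.

Lemma base_val_nu_digit (e : nat) : base_val p nu_digit e = nu e.
Proof.
elim: e => [|e IHe] /=; last by rewrite IHe nu_succ.
by have := nu_lt 0; rewrite expn0 ltnS leqn0 => /eqP.
Qed.

Lemma nu_digit_lt (i : nat) : (nu_digit i < p)%N.
Proof.
case: i => [|i]; first by rewrite /nu_digit /=; have := nu_lt 0; rewrite expn0; nia.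
by have := nu_shift_lt i 1; rewrite addn1 expn1 /nu_digit /=; lia.
Qed.

Lemma nu_digit_nonterm {k : nat} : (0 < nu k)%N ->
  forall N, exists e, (N <= e)%N /\ nu_digit e <> 0%N.
Proof.
move=> nu_k_gt0 N; case: (pselect (exists e, (N <= e)%N /\ nu_digit e <> 0%N)) => //.
move=> no_digit; exfalso.
have digit0 e : (N <= e)%N -> nu_digit e = 0%N.
  move=> le_Ne; have [//|digit_neq0] := eqVneq (nu_digit e) 0%N.
  by exfalso; apply: no_digit; exists e; split=> //; exact/eqP.
have nu_shift j : nu (N + j) = (nu N * p ^ j)%N.
  elim: j => [|j IHj]; first by rewrite addn0 expn0 muln1.
  rewrite addnS nu_succ IHj digit0; last by rewrite -addnS leq_addr.
  by rewrite addn0 expnS mulnCA.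
by have := nu_shift_gt N k nu_k_gt0; rewrite nu_shift ltnn.
Qed.

Definition nu_lim : R := base_lim p nu_digit.

Lemma nu_lim_bounds (e : nat) :
  (nu e)%:R <= (p ^ e)%N%:R * nu_lim <= (nu e).+1%:R.
Proof.
by rewrite -base_val_nu_digit; apply: base_lim_bounds => // i _; exact: nu_digit_lt.
Qed.

Lemma nu_lim_ge0 : 0 <= nu_lim.
Proof.
have /andP[+ _] := nu_lim_bounds 0; rewrite expn0 mul1r; exact: le_trans.
Qed.

Lemma nu_lim_expansion {k : nat} : (0 < nu k)%N ->
  nonterm_expansion p nu_lim nu_digit.
Proof.
move=> nu_k_gt0; apply: nonterm_expansion_base_lim => //.
  by move=> i _; exact: nu_digit_lt.
exact: nu_digit_nonterm nu_k_gt0.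
Qed.

Lemma nu_lim_eq0 : (forall k, nu k = 0%N) -> nu_lim = 0.
Proof.
move=> nu0; have ratio0 n : base_ratio p nu_digit n = 0.
  by rewrite /base_ratio base_val_nu_digit nu0 mul0r.
rewrite /nu_lim /base_lim -[RHS]sup1; congr sup.
by apply/seteqP; split=> [_ [n _ <-]|_ ->]; [exact: ratio0 | exists 0%N].
Qed.

Lemma Fpure_pair_nu_lim : Fpure_pair p f nu_lim.
Proof.
move=> e _; apply: splits_exprW (nu_splits e); rewrite truncn_le_nat.
have /andP[_ le_nu1] := nu_lim_bounds e.
have := nu_lim_ge0; rewrite le_eqVlt => /orP[/eqP <-|L_gt0].
  by rewrite mulr0 ltr0Sn.
by apply: lt_le_trans le_nu1; rewrite mulrBl mul1r ltrBlDr ltrDl.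
Qed.

Lemma Fpure_pair_le_nu_lim (lambda : R) : Fpure_pair p f lambda -> lambda <= nu_lim.
Proof.
move=> lambda_pure; rewrite leNgt; apply/negP => lt_L_lambda.
have gap_gt0 : 0 < lambda - nu_lim by rewrite subr_gt0.
have [e [e_ge1 le_e]] := exists_expn_ge ((1 + lambda) / (lambda - nu_lim)) p_gt1.
have := nu_max (lambda_pure e e_ge1); rewrite leqNgt => /negP; apply.
rewrite truncn_gt_nat; have /andP[le_nu _] := nu_lim_bounds e.
have : 1 + lambda <= ((p ^ e)%N%:R - 1) * (lambda - nu_lim).
  by rewrite -ler_pdivrMr.
move: le_nu lt_L_lambda; rewrite -addn1 natrD.
move: ((p ^ e)%N%:R : R) ((nu e)%:R : R) => P n; nra.
Qed.

Lemma fpt_eq_nu_lim : fpt p f = nu_lim.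
Proof.
apply: sup_max_eq => [|lambda [_ /Fpure_pair_le_nu_lim //]].
by split; [exact: nu_lim_ge0 | exact: Fpure_pair_nu_lim].
Qed.

Lemma trunc_exp_fpt (d : nat) :
  (p ^ d)%N%:R * trunc_exp p (fpt p f) d = (nu d)%:R.
Proof.
rewrite fpt_eq_nu_lim; have [[k nu_k_gt0]|no_nu] := pselect (exists k, 0 < nu k)%N.
  rewrite (@trunc_exp_nonterm p p_gt1 _ _ d (nu_lim_expansion nu_k_gt0)).
  by rewrite base_val_nu_digit.
have nu0 k : nu k = 0%N.
  by apply/eqP; rewrite -leqn0 leqNgt; apply/negP => ?; apply: no_nu; exists k.
by rewrite nu_lim_eq0 // trunc_exp0 // mulr0 nu0.
Qed.

End SplittingNumbers.

Theorem mainTheorem3 (p : nat) (A : comNzRingType) (f : A) :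
  prime p -> p \in [pchar A] -> @Fpure A p ->
  f != 0 -> ~ (exists g : A, f * g = 1) ->
  forall d : nat, (1 <= d)%N ->
    exists n : nat,
      splits p d (f ^+ n) /\
      (forall a : nat, splits p d (f ^+ a) -> (a <= n)%N) /\
      (p ^ d)%N%:R * trunc_exp p (fpt p f) d = (n%:R : Rdefinitions.R).
Proof.
move=> p_prime pcharA FpureA _ f_nonunit d _.
have p_gt1 := prime_gt1 p_prime.
exists (nu p f d); split; first exact: nu_splits.
split; first exact: nu_max.
exact: trunc_exp_fpt.
Qed.
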